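(* Let $R$ be a finite set of nonnegative integers and let $\mathcal{H}$ be a family of hypergraphs each having set of edge types $R$. For each $n$, let $\pi_n(\mathcal{H})$ be the maximum of the Lubell function $h_n(G)$ over all hypergraphs $G$ on $n$ vertices with $R(G)\subseteq R$ which contain no member of $\mathcal{H}$ as a subgraph. Then the limit $\lim_{n\to\infty}\pi_n(\mathcal{H})$ exists.
   Context: A hypergraph $H=(V,E)$ has a finite vertex set $V$ and edge set $E\subseteq 2^V$ (edges may have different sizes). $R(H)=\{|F|: F\in E\}$ is its set of edge types. A hypergraph $H_1$ is a subgraph of $H_2$ if there is an injective map $f\colon V(H_1)\to V(H_2)$ with $f(F)\in E(H_2)$ for every $F\in E(H_1)$. For a hypergraph $G$ on $n$ vertices, the Lubell function is $h_n(G)=\sum_{F\in E(G)} 1/\binom{n}{|F|}$. *)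

From HB Require Import structures.
From mathcomp Require Import all_boot all_order all_algebra.
From mathcomp Require Import boolp classical_sets reals topology normedtype sequences.
Set Implicit Arguments. Unset Strict Implicit. Unset Printing Implicit Defensive.
Import Order.TTheory GRing.Theory Num.Theory.
Local Open Scope ring_scope.

Definition hgraph (m : nat) := {set {set 'I_m}}.

Definition edge_types (m : nat) (E : hgraph m) : pred nat :=
  fun k => [exists F in E, #|F| == k].

Definition subgraph (m n : nat) (H1 : hgraph m) (H2 : hgraph n) : Prop :=
  exists f : 'I_m -> 'I_n, injective f /\ forall F, F \in H1 -> f @: F \in H2.

Definition lubell (Rt : realType) (n : nat) (G : hgraph n) : Rt :=
  \sum_(F in G) (('C(n, #|F|))%:R)^-1.

Definition hfamily := forall m : nat, hgraph m -> Prop.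

Definition admissible (Rs : seq nat) (Hfam : hfamily) (n : nat) (G : hgraph n) : Prop :=
  (forall F, F \in G -> #|F| \in Rs) /\
  (forall m (H : hgraph m), Hfam m H -> ~ subgraph H G).

(* pi_n(H): maximum of the Lubell function over admissible G on n vertices
   (0 if there is no admissible G; since h_n >= 0, this is the true max
   whenever the set is nonempty). *)
Definition pi_n (Rt : realType) (Rs : seq nat) (Hfam : hfamily) (n : nat) : Rt :=
  \big[Num.max/0]_(G : hgraph n | `[< admissible Rs Hfam G >]) lubell Rt G.

From HB Require Import structures.
From mathcomp Require Import all_boot all_order all_algebra.
From mathcomp Require Import boolp classical_sets reals topology normedtype sequences.
Import numFieldNormedType.Exports.
Import Order.TTheory GRing.Theory Num.Theory.
Local Open Scope ring_scope.
Local Open Scope classical_set_scope.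

(* Averaging over vertices: deleting a vertex v from G on n+1 vertices keeps the
   edges avoiding v, and each edge F of size k <= n avoids exactly n+1-k of the
   vertices.  Since (n+1-k)/C(n,k) = (n+1)/C(n+1,k), the Lubell values of the
   n+1 vertex-deleted subgraphs sum to (n+1) h_{n+1}(G), so one of them has
   h_n >= h_{n+1}(G).  Vertex-deleted subgraphs of admissible hypergraphs are
   admissible, hence pi_{n+1} <= pi_n once n >= max R: the sequence is
   nonincreasing and nonnegative, so it converges. *)

Definition delete_vertex {n : nat} (v : 'I_n.+1) (G : hgraph n.+1) : hgraph n :=
  [set F : {set 'I_n} | (lift v @: F)%SET \in G]%SET.

Lemma lift_preimK n (v : 'I_n.+1) (F : {set 'I_n.+1}) :
  v \notin F -> (lift v @: (lift v @^-1: F))%SET = F.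
Proof.
move=> vF; apply/setP => x; apply/imsetP/idP => [[y]|xF].
  by rewrite inE => Fy ->.
have xv : x != v by apply: contraNneq vF => <-.
case: (unliftP v x) => [y Ex|Ev]; last by rewrite Ev eqxx in xv.
by exists y; rewrite // inE -Ex.
Qed.

Lemma notin_lift_imset n (v : 'I_n.+1) (F : {set 'I_n}) :
  v \notin (lift v @: F)%SET.
Proof. by apply/imsetP => -[y _ vy]; have := neq_lift v y; rewrite -vy eqxx. Qed.

Lemma lubell_delete_vertex (Rt : realType) n (v : 'I_n.+1) (G : hgraph n.+1) :
  lubell Rt (delete_vertex v G) =
  \sum_(F : {set 'I_n.+1} | (F \in G) && (v \notin F)) ('C(n, #|F|)%:R)^-1.
Proof.
rewrite /lubell (reindex_onto (fun F : {set 'I_n} => lift v @: F)%SET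
  (fun F => lift v @^-1: F)%SET);
  last by move=> F /andP[_ vF]; rewrite lift_preimK.
apply: eq_big => [F|F _]; last by rewrite card_imset //; exact: lift_inj.
rewrite inE notin_lift_imset andbT; case: (_ \in G) => //=.
by apply/esym/eqP/setP => x; rewrite inE mem_imset //; exact: lift_inj.
Qed.

Lemma binomial_ratioS (R : numFieldType) n k : (k <= n)%N ->
  (n.+1 - k)%:R / 'C(n, k)%:R = n.+1%:R / 'C(n.+1, k)%:R :> R.
Proof.
move=> kn.
have Cn : 'C(n, k)%:R != 0 :> R by rewrite pnatr_eq0 -lt0n bin_gt0.
have CnS : 'C(n.+1, k)%:R != 0 :> R by rewrite pnatr_eq0 -lt0n bin_gt0 ltnW.
apply/eqP; rewrite eqr_div // -!natrM eqr_nat.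
by rewrite mulnC mul_bin_down mulnC.
Qed.

Lemma sum_lubell_delete_vertex (Rt : realType) n (G : hgraph n.+1) :
  (forall F, F \in G -> #|F| <= n)%N ->
  \sum_(v : 'I_n.+1) lubell Rt (delete_vertex v G) = n.+1%:R * lubell Rt G.
Proof.
move=> small; under eq_bigr => v _ do rewrite lubell_delete_vertex big_mkcondr.
rewrite exchange_big /lubell mulr_sumr; apply: eq_bigr => F FG.
rewrite -big_mkcond sumr_const -[LHS]mulr_natl.
have -> : #|[pred v : 'I_n.+1 | v \notin F]| = (n.+1 - #|F|)%N.
  have cardF := cardC F; rewrite card_ord in cardF.
  by apply/eqP; rewrite -(eqn_add2l #|F|) cardF subnKC // leqW ?small.
by rewrite binomial_ratioS ?small.
Qed.

Lemma lubell_ge0 (Rt : realType) n (G : hgraph n) : 0 <= lubell Rt G.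
Proof. by apply: sumr_ge0 => F _; rewrite invr_ge0 ler0n. Qed.

Lemma pi_n_ge0 (Rt : realType) Rs Hfam n : 0 <= pi_n Rt Rs Hfam n.
Proof.
rewrite /pi_n; elim/big_ind: _ => // [x y x0 _|G _]; last exact: lubell_ge0.
by rewrite le_max x0.
Qed.

Lemma admissible_delete_vertex Rs Hfam n (v : 'I_n.+1) (G : hgraph n.+1) :
  admissible Rs Hfam G -> admissible Rs Hfam (delete_vertex v G).
Proof.
case=> typesG freeG; split => [F|m H HH [f [finj fH]]].
  by rewrite inE => /typesG; rewrite card_imset //; exact: lift_inj.
apply: (freeG m H HH); exists (lift v \o f); split.
  exact: inj_comp (@lift_inj _ v) finj.
by move=> F /fH; rewrite inE -imset_comp.
Qed.

Lemma pi_nS_le (Rt : realType) Rs Hfam n : (\max_(k <- Rs) k <= n)%N ->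
  pi_n Rt Rs Hfam n.+1 <= pi_n Rt Rs Hfam n.
Proof.
move=> maxRs; apply: bigmax_le; first exact: pi_n_ge0.
move=> G /asboolP admG.
have small F : F \in G -> (#|F| <= n)%N.
  move=> /admG.1 FRs; apply: leq_trans maxRs.
  exact: (@leq_bigmax_seq _ Rs xpredT id _ FRs).
have n1_gt0 : 0 < n.+1%:R :> Rt by rewrite ltr0n.
rewrite -(ler_pM2l n1_gt0) -sum_lubell_delete_vertex //.
apply: le_trans (_ : \sum_(v : 'I_n.+1) pi_n Rt Rs Hfam n <= _).
  apply: ler_sum => v _; rewrite /pi_n; apply: le_bigmax_cond.
  by apply/asboolP; exact: (admissible_delete_vertex _ _ _ v _ admG).
by rewrite sumr_const card_ord mulr_natl.
Qed.

Theorem mainTheorem1 (Rt : realType) (Rs : seq nat) (Hfam : hfamily) :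
  (forall m (H : hgraph m), Hfam m H -> forall k, (k \in Rs) = edge_types H k) ->
  exists l : Rt, (pi_n Rt Rs Hfam n) @[n --> \oo] --> l.
Proof.
move=> _; set N := (\max_(k <- Rs) k)%N.
have cvg_tail : cvgn (fun n => pi_n Rt Rs Hfam (n + N)).
  apply: nonincreasing_is_cvgn.
    apply/nonincreasing_seqP => n; rewrite addSn; exact/pi_nS_le/leq_addl.
  by exists 0 => _ [n _ <-]; apply: pi_n_ge0.
by exists (limn (fun n => pi_n Rt Rs Hfam (n + N))); rewrite -(cvg_shiftn N).
Qed.
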